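(* Let $(\mathbb{X},d)$ be a complete metric space, let $F=(\mathbb{X};f_1,\dots,f_N)$ be an iterated function system of continuous maps $f_i:\mathbb{X}\to\mathbb{X}$, and let $A$ be a point-fibred attractor of $F$ with coordinate map $\pi:[N]^\infty\to A$. With respect to $A$ and $F$ (and the notions of disjunctive, reversible, strongly reversible and full words defined in the context): \begin{enumerate} \item If $N\ge 2$, there are infinitely many disjunctive words in $[N]^\infty$. \item If $A^{o}\neq\emptyset$, then every disjunctive word is strongly reversible. \item Every strongly reversible word is reversible. \item A word $\theta\in[N]^\infty$ is reversible if and only if it is full. \end{enumerate}
   Context: $S^o$ denotes the interior of a set $S$. $\mathbb{H}(\mathbb{X})$ is the set of nonempty compact subsets of $\mathbb{X}$ with the Hausdorff metric, and $F(B)=\bigcup_i f_i(B)$, with $F^k$ its $k$-fold iterate. A nonempty compact $A$ is an attractor of $F$ if $F(A)=A$ and there is an open $U\supset A$ with $F^k(S)\to A$ in the Hausdorff metric for all $S\in\mathbb{H}(U)$; the basin $B(A)$ is the union of all such $U$. $[N]=\{1,\dots,N\}$, $[N]^\infty$ is the set of infinite words $\omega=\omega_1\omega_2\cdots$ with $\omega_i\in[N]$, $\omega|k=\omega_1\cdots\omega_k$, and $f_{\omega|k}=f_{\omega_1}\circ\cdots\circ f_{\omega_k}$. The attractor $A$ is point-fibred if for every $\omega\in[N]^\infty$ and every $C\in\mathbb{H}(\mathbb{X})$ with $C\subset B(A)$ the sequence $f_{\omega|k}(C)$ converges in $\mathbb{H}(\mathbb{X})$ to a singleton $\{\pi(\omega)\}$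 independent of $C$; this defines the coordinate map $\pi$, and any word in $\pi^{-1}(x)$ is an address of $x\in A$. A subword of a word is a string of consecutive letters. A word $\theta\in[N]^\infty$ is disjunctive if every finite word over $[N]$ is a subword of $\theta$. $\theta$ is reversible (w.r.t. $A,F$) if there is $\omega\in[N]^\infty$ with $\pi(\omega)\in A^o$ such that for all positive integers $M,L$ there is an integer $m\ge M$ with $\omega_1\omega_2\cdots\omega_L=\theta_{m+L}\theta_{m+L-1}\cdots\theta_{m+1}$. $\theta$ is strongly reversible if there is $\omega\in[N]^\infty$ with $\pi(\omega)\in A^o$ such that for every positive integer $M$ there is $m\ge M$ with $\omega_1\cdots\omega_m=\theta_m\theta_{m-1}\cdots\theta_1$. $\theta$ is full if there exists a nonempty compact set $A'\subset A^o$ such that for every positive integer $M$ there exist integers $n>m\ge M$ with $f_{\theta_n}\circ f_{\theta_{n-1}}\circ\cdots\circ f_{\theta_{m+1}}(A)\subset A'$. *)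

From Stdlib Require Import Reals List Arith.
Open Scope R_scope.

Section Defs.
Variable X : Type.
Variable d : X -> X -> R.

Definition is_metric : Prop :=
  (forall x y, 0 <= d x y) /\ (forall x y, d x y = 0 <-> x = y) /\
  (forall x y, d x y = d y x) /\ (forall x y z, d x z <= d x y + d y z).

Definition cauchy_seq (u : nat -> X) : Prop :=
  forall e, 0 < e -> exists K, forall m n, (K <= m)%nat -> (K <= n)%nat -> d (u m) (u n) < e.

Definition converges_to (u : nat -> X) (x : X) : Prop :=
  forall e, 0 < e -> exists K, forall n, (K <= n)%nat -> d (u n) x < e.

Definition complete_metric : Prop :=
  forall u, cauchy_seq u -> exists x, converges_to u x.

Definition subset (S T : X -> Prop) : Prop := forall x, S x -> T x.

Definition open_set (U : X -> Prop) : Prop :=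
  forall x, U x -> exists e, 0 < e /\ forall y, d x y < e -> U y.

Definition interior_set (S : X -> Prop) (x : X) : Prop :=
  exists U, open_set U /\ subset U S /\ U x.

Definition compact_set (K : X -> Prop) : Prop :=
  forall (I : Type) (U : I -> X -> Prop), (forall i, open_set (U i)) ->
    (forall x, K x -> exists i, U i x) ->
    exists l : list I, forall x, K x -> exists i, In i l /\ U i x.

Definition nonempty_set (S : X -> Prop) : Prop := exists x, S x.

Definition inH (S : X -> Prop) : Prop := nonempty_set S /\ compact_set S.

Definition continuous_map (g : X -> X) : Prop :=
  forall x e, 0 < e -> exists delta, 0 < delta /\
    forall y, d x y < delta -> d (g x) (g y) < e.

(* convergence S_k -> T in the Hausdorff metric, written out:
   h(S_k,T) -> 0 *)
Definition hconv (S : nat -> X -> Prop) (T : X -> Prop) : Prop :=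
  forall e, 0 < e -> exists K, forall k, (K <= k)%nat ->
    (forall x, S k x -> exists y, T y /\ d x y < e) /\
    (forall y, T y -> exists x, S k x /\ d x y < e).

Definition image_set (g : X -> X) (S : X -> Prop) (y : X) : Prop :=
  exists x, S x /\ y = g x.

Definition singleton (p : X) (y : X) : Prop := y = p.

Variable N : nat.
Variable f : nat -> X -> X.   (* maps f_0, ..., f_{N-1}  (paper's f_1..f_N) *)

Definition IFS_ok : Prop := forall i, (i < N)%nat -> continuous_map (f i).

Definition Fop (B : X -> Prop) (y : X) : Prop :=
  exists i, (i < N)%nat /\ image_set (f i) B y.

Fixpoint Fiter (k : nat) (B : X -> Prop) : X -> Prop :=
  match k with O => B | S k' => Fop (Fiter k' B) end.

Definition attracting_nbhd (A U : X -> Prop) : Prop :=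
  open_set U /\ subset A U /\
  forall S, inH S -> subset S U -> hconv (fun k => Fiter k S) A.

Definition attractor (A : X -> Prop) : Prop :=
  inH A /\ (forall y, Fop A y <-> A y) /\ exists U, attracting_nbhd A U.

Definition basin (A : X -> Prop) (x : X) : Prop :=
  exists U, attracting_nbhd A U /\ U x.

(* infinite words over the alphabet {0,...,N-1}; the paper's letter
   omega_j (j >= 1) is  omega (j-1). *)
Definition word (w : nat -> nat) : Prop := forall i, (w i < N)%nat.

Definition fcomp (l : list nat) : X -> X :=
  fold_right (fun i g => fun x => f i (g x)) (fun x => x) l.

Definition prefix (w : nat -> nat) (k : nat) : list nat := map w (seq 0 k).

Definition point_fibred (A : X -> Prop) : Prop :=
  forall w, word w -> exists p, forall C, inH C -> subset C (basin A) ->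
    hconv (fun k => image_set (fcomp (prefix w k)) C) (singleton p).

Definition coordinate_map (A : X -> Prop) (pi : (nat -> nat) -> X) : Prop :=
  forall w, word w -> forall C, inH C -> subset C (basin A) ->
    hconv (fun k => image_set (fcomp (prefix w k)) C) (singleton (pi w)).

Definition disjunctive (th : nat -> nat) : Prop :=
  forall l : list nat, (forall a, In a l -> (a < N)%nat) ->
    exists k, forall i, (i < length l)%nat -> th (k + i)%nat = nth i l O.

(* omega_1...omega_L = theta_{m+L} ... theta_{m+1} *)
Definition reversible (A : X -> Prop) (pi : (nat -> nat) -> X) (th : nat -> nat) : Prop :=
  exists w, word w /\ interior_set A (pi w) /\
    forall M L, (1 <= M)%nat -> (1 <= L)%nat ->
      exists m, (M <= m)%nat /\
        forall i, (i < L)%nat -> w i = th (m + L - 1 - i)%nat.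

(* omega_1...omega_m = theta_m ... theta_1 *)
Definition strongly_reversible (A : X -> Prop) (pi : (nat -> nat) -> X) (th : nat -> nat) : Prop :=
  exists w, word w /\ interior_set A (pi w) /\
    forall M, (1 <= M)%nat ->
      exists m, (M <= m)%nat /\
        forall i, (i < m)%nat -> w i = th (m - 1 - i)%nat.

(* f_{theta_n} o ... o f_{theta_{m+1}} (A) subset A' *)
Definition full (A : X -> Prop) (th : nat -> nat) : Prop :=
  exists A', inH A' /\ subset A' (interior_set A) /\
    forall M, (1 <= M)%nat ->
      exists m n, (M <= m)%nat /\ (m < n)%nat /\
        subset (image_set (fcomp (rev (map th (seq m (n - m))))) A) A'.

End Defs.

(* Every finite word over the alphabet occurs in a disjunctive word, in particular any
   reversed prefix of an address of an interior point of A; reading the disjunctive word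
   backwards from ever later positions at which longer and longer prefixes of it recur
   yields an address extending that prefix, so its coordinate lies in the interior.
   If pi w is interior, then f_(w|K)(A) is a compact subset of the interior for large K,
   and reversibility places the letters of w|K backwards inside the word: that is
   fullness. Conversely, Koenig's lemma applied to the reversed blocks of a full word gives
   a limit word whose coordinate is a limit of points of the compact set A'. *)

From Stdlib Require Import Reals List Arith Lia Lra Classical ClassicalEpsilon ChoiceFacts.
Import ListNotations.
Open Scope R_scope.

Lemma dependent_choice {T : Type} (P : T -> Prop) (R : T -> T -> Prop) (x0 : T) :
  P x0 -> (forall x, P x -> exists y, P y /\ R x y) ->
  exists g : nat -> T, g 0%nat = x0 /\ forall n, P (g n) /\ R (g n) (g (S n)).
Proof.
  intros H0 Hstep.
  destruct (functional_choice_imp_functional_dependent_choice choice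
              (fun x y => P x -> P y /\ R x y)) with (x0 := x0) as [g [Hg0 Hg]].
  - intro x. destruct (classic (P x)) as [Hx | Hx].
    + destruct (Hstep x Hx) as [y Hy]. exists y. auto.
    + exists x. tauto.
  - assert (HP : forall n, P (g n)).
    { induction n as [|n IH]; [congruence | exact (proj1 (Hg n IH))]. }
    exists g. split; [exact Hg0 | intro n; split; [apply HP | apply (Hg n (HP n))]].
Qed.

Lemma eventually_forall_lt (Q : nat -> nat -> Prop) n :
  (forall a, (a < n)%nat -> exists J, forall j, (J <= j)%nat -> Q a j) ->
  exists J, forall a, (a < n)%nat -> forall j, (J <= j)%nat -> Q a j.
Proof.
  induction n as [|n IH]; intro H.
  - exists 0%nat. intros a Ha. lia.
  - destruct IH as [J1 H1]; [intros a Ha; apply H; lia|].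
    destruct (H n (Nat.lt_succ_diag_r n)) as [J2 H2].
    exists (Nat.max J1 J2). intros a Ha j Hj.
    destruct (Nat.eq_dec a n) as [-> | Hne].
    + apply H2. lia.
    + apply H1; lia.
Qed.

Section Words.

Variable N : nat.

Lemma length_prefix w k : length (prefix w k) = k.
Proof. unfold prefix. rewrite length_map, length_seq. reflexivity. Qed.

Lemma nth_prefix w k i : (i < k)%nat -> nth i (prefix w k) 0%nat = w i.
Proof.
  intro Hi. unfold prefix.
  rewrite (nth_indep _ _ (w 0%nat)) by (rewrite length_map, length_seq; lia).
  rewrite map_nth, seq_nth by lia. reflexivity.
Qed.

Lemma prefix_S w k : prefix w (S k) = prefix w k ++ [w k].
Proof. unfold prefix. rewrite seq_S, map_app. reflexivity. Qed.

Lemma prefix_add w k r : prefix w (k + r) = prefix w k ++ map w (seq k r).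
Proof. unfold prefix. rewrite seq_app, map_app. reflexivity. Qed.

Lemma prefix_ext w w' k :
  (forall i, (i < k)%nat -> w i = w' i) -> prefix w k = prefix w' k.
Proof.
  intro H. unfold prefix. apply map_ext_in. intros a Ha. apply in_seq in Ha. apply H. lia.
Qed.

Lemma prefix_inj w w' k :
  prefix w k = prefix w' k -> forall i, (i < k)%nat -> w i = w' i.
Proof.
  intros H i Hi. rewrite <- (nth_prefix w k i Hi), <- (nth_prefix w' k i Hi), H.
  reflexivity.
Qed.

Lemma rev_map_seq (th : nat -> nat) m r :
  rev (map th (seq m r)) = prefix (fun i => th (m + r - 1 - i)%nat) r.
Proof.
  apply nth_ext with (d := 0%nat) (d' := 0%nat).
  - rewrite length_rev, length_map, length_seq, length_prefix. reflexivity.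
  - intros i Hi. rewrite length_rev, length_map, length_seq in Hi.
    rewrite rev_nth by (rewrite length_map, length_seq; lia).
    rewrite length_map, length_seq, nth_prefix by lia.
    rewrite (nth_indep _ _ (th 0%nat)) by (rewrite length_map, length_seq; lia).
    rewrite map_nth, seq_nth by lia. f_equal. lia.
Qed.

Lemma word_segment_letters w k r :
  word N w -> forall a, In a (map w (seq k r)) -> (a < N)%nat.
Proof. intros Hw a Ha. apply in_map_iff in Ha. destruct Ha as [b [<- _]]. apply Hw. Qed.

Lemma word_prefix_letters w k :
  word N w -> forall a, In a (prefix w k) -> (a < N)%nat.
Proof. apply word_segment_letters. Qed.

Fixpoint all_words (n : nat) : list (list nat) :=
  match n with
  | O => [[]]
  | S n' => flat_map (fun a => map (cons a) (all_words n')) (seq 0 N)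
  end.

Lemma in_all_words l : (forall a, In a l -> (a < N)%nat) -> In l (all_words (length l)).
Proof.
  induction l as [|a l IH]; intro H; simpl; [auto|].
  apply in_flat_map. exists a. split.
  - apply in_seq. specialize (H a (or_introl eq_refl)). lia.
  - apply in_map, IH. intros b Hb. apply H. right; exact Hb.
Qed.

Lemma all_words_letters n l a : In l (all_words n) -> In a l -> (a < N)%nat.
Proof.
  revert l. induction n as [|n IH]; intros l Hl Ha; simpl in Hl.
  - destruct Hl as [<- | []]. destruct Ha.
  - apply in_flat_map in Hl. destruct Hl as [b [Hb Hl]]. apply in_map_iff in Hl.
    destruct Hl as [l' [<- Hl']]. destruct Ha as [<- | Ha].
    + apply in_seq in Hb. lia.
    + eapply IH; eauto.
Qed.

(* The trailing letter of each block makes [catalogue n] have length at least [n],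
   so that letter [p] of [catalogue_word] is already fixed in [catalogue (S p)]. *)
Definition catalogue_block n := concat (all_words n) ++ [0%nat].

Fixpoint catalogue n : list nat :=
  match n with O => [] | S n' => catalogue n' ++ catalogue_block n' end.

Definition catalogue_word (p : nat) : nat := nth p (catalogue (S p)) 0%nat.

Lemma catalogue_length n : (n <= length (catalogue n))%nat.
Proof.
  induction n as [|n IH]; simpl; [lia|].
  rewrite length_app. unfold catalogue_block. rewrite length_app. simpl. lia.
Qed.

Lemma catalogue_extends n m : (n <= m)%nat -> exists r, catalogue m = catalogue n ++ r.
Proof.
  induction 1 as [|m _ [r Hr]].
  - exists []. rewrite app_nil_r. reflexivity.
  - exists (r ++ catalogue_block m). simpl. rewrite Hr, app_assoc. reflexivity.
Qed.

Lemma catalogue_word_nth n p :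
  (p < length (catalogue n))%nat -> catalogue_word p = nth p (catalogue n) 0%nat.
Proof.
  intro Hp. unfold catalogue_word.
  destruct (catalogue_extends n (Nat.max n (S p))) as [r1 H1]; [lia|].
  destruct (catalogue_extends (S p) (Nat.max n (S p))) as [r2 H2]; [lia|].
  assert (HSp : (p < length (catalogue (S p)))%nat)
    by (pose proof (catalogue_length (S p)); lia).
  rewrite <- (app_nth1 _ r2 _ HSp), <- H2, H1, app_nth1 by exact Hp. reflexivity.
Qed.

Lemma catalogue_letters n a : (0 < N)%nat -> In a (catalogue n) -> (a < N)%nat.
Proof.
  intro HN. induction n as [|n IH]; simpl; [tauto|].
  intro Ha. apply in_app_or in Ha. destruct Ha as [Ha | Ha]; [auto|].
  unfold catalogue_block in Ha. apply in_app_or in Ha.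
  destruct Ha as [Ha | [<- | []]]; [|lia].
  apply in_concat in Ha. destruct Ha as [l [Hl Ha]]. eapply all_words_letters; eauto.
Qed.

Lemma catalogue_word_word : (0 < N)%nat -> word N catalogue_word.
Proof.
  intros HN p. unfold catalogue_word.
  destruct (Nat.lt_ge_cases p (length (catalogue (S p)))).
  - eapply catalogue_letters; eauto. apply nth_In; auto.
  - rewrite nth_overflow by lia. exact HN.
Qed.

Lemma catalogue_word_disjunctive : disjunctive N catalogue_word.
Proof.
  intros l Hl. apply in_all_words in Hl. apply in_split in Hl.
  destruct Hl as [ws1 [ws2 E]].
  exists (length (catalogue (length l)) + length (concat ws1))%nat.
  intros i Hi.
  assert (Hcat : catalogue (S (length l))
          = catalogue (length l) ++ concat ws1 ++ l ++ concat ws2 ++ [0%nat]).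
  { simpl. unfold catalogue_block. rewrite E, concat_app. simpl.
    rewrite !app_assoc. reflexivity. }
  rewrite (catalogue_word_nth (S (length l))).
  - rewrite Hcat, app_nth2 by lia. rewrite app_nth2 by lia. rewrite app_nth1 by lia.
    f_equal. lia.
  - rewrite Hcat, !length_app. lia.
Qed.

Definition prepend (u : list nat) (w : nat -> nat) (i : nat) : nat :=
  if (i <? length u)%nat then nth i u 0%nat else w (i - length u)%nat.

Lemma prepend_word u w :
  (forall a, In a u -> (a < N)%nat) -> word N w -> word N (prepend u w).
Proof.
  intros Hu Hw i. unfold prepend. destruct (Nat.ltb_spec i (length u)).
  - apply Hu, nth_In. exact H.
  - apply Hw.
Qed.

Lemma prepend_disjunctive u w : disjunctive N w -> disjunctive N (prepend u w).
Proof.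
  intros Hw l Hl. destruct (Hw l Hl) as [k Hk]. exists (length u + k)%nat.
  intros i Hi. unfold prepend. destruct (Nat.ltb_spec (length u + k + i) (length u)); [lia|].
  rewrite <- Hk by exact Hi. f_equal. lia.
Qed.

(* Cantor's diagonal argument: letter [j] of the new word differs from letter [j] of
   the [j]-th listed word. *)
Lemma disjunctive_word_not_in (L : list (nat -> nat)) :
  (2 <= N)%nat -> exists th, word N th /\ disjunctive N th /\ ~ In th L.
Proof.
  intro HN.
  set (flip j := if (nth j L (fun _ => 0%nat) j =? 0)%nat then 1%nat else 0%nat).
  set (u := map flip (seq 0 (length L))).
  assert (Hu : forall j, (j < length L)%nat -> nth j u 0%nat = flip j).
  { intros j Hj. unfold u.
    rewrite (nth_indep _ _ (flip 0%nat)) by (rewrite length_map, length_seq; lia).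
    rewrite map_nth, seq_nth by lia. reflexivity. }
  exists (prepend u catalogue_word). split; [|split].
  - apply prepend_word; [|apply catalogue_word_word; lia].
    intros a Ha. unfold u in Ha. apply in_map_iff in Ha. destruct Ha as [j [<- _]].
    unfold flip. destruct (_ =? 0)%nat; lia.
  - apply prepend_disjunctive, catalogue_word_disjunctive.
  - intro Hin. destruct (In_nth L _ (fun _ => 0%nat) Hin) as [j [Hj E]].
    assert (Ej := f_equal (fun g => g j) E). simpl in Ej.
    unfold prepend in Ej. unfold u at 1 in Ej. rewrite length_map, length_seq in Ej.
    destruct (Nat.ltb_spec j (length L)); [|lia].
    rewrite Hu in Ej by exact Hj. unfold flip in Ej.
    destruct (Nat.eqb_spec (nth j L (fun _ => 0%nat) j) 0); lia.
Qed.

Definition prefix_recurs (th : nat -> nat) (m n : nat) : Prop :=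
  forall t, (t < m)%nat -> th (n - m + t)%nat = th t.

Lemma prefix_recurs_trans th m n p : (m <= n)%nat -> (n <= p)%nat ->
  prefix_recurs th m n -> prefix_recurs th n p -> prefix_recurs th m p.
Proof.
  intros Hmn Hnp H1 H2 t Ht. rewrite <- (H1 t Ht), <- (H2 (n - m + t)%nat) by lia.
  f_equal. lia.
Qed.

Lemma disjunctive_occurs_late th : word N th -> disjunctive N th ->
  forall l, (forall a, In a l -> (a < N)%nat) -> forall M, exists k, (M <= k)%nat /\
    forall i, (i < length l)%nat -> th (k + i)%nat = nth i l 0%nat.
Proof.
  intros Hth Hd l Hl M. destruct (Hd (prefix th M ++ l)) as [k Hk].
  { intros a Ha. apply in_app_or in Ha.
    destruct Ha as [Ha | Ha]; [exact (word_prefix_letters th M Hth a Ha) | auto]. }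
  exists (k + M)%nat. split; [lia|]. intros i Hi.
  rewrite <- Nat.add_assoc, Hk by (rewrite length_app, length_prefix; lia).
  rewrite app_nth2 by (rewrite length_prefix; lia). rewrite length_prefix. f_equal. lia.
Qed.

Lemma disjunctive_prefix_recurs th : word N th -> disjunctive N th ->
  forall m, exists n, (m < n)%nat /\ prefix_recurs th m n.
Proof.
  intros Hth Hd m.
  destruct (disjunctive_occurs_late th Hth Hd (prefix th m) (word_prefix_letters th m Hth) 1)
    as [k [Hk E]].
  rewrite length_prefix in E. exists (k + m)%nat. split; [lia|]. intros t Ht.
  replace (k + m - m + t)%nat with (k + t)%nat by lia. rewrite E by exact Ht.
  apply nth_prefix, Ht.
Qed.

Lemma prefix_recurs_chain th (ms : nat -> nat) :
  (forall j, (ms j < ms (S j))%nat /\ prefix_recurs th (ms j) (ms (S j))) ->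
  forall j j', (j <= j')%nat -> (ms j <= ms j')%nat /\ prefix_recurs th (ms j) (ms j').
Proof.
  intros Hms j j' Hjj'. induction Hjj' as [|j' _ [IH1 IH2]].
  - split; [lia|]. intros t Ht. f_equal. lia.
  - destruct (Hms j') as [H1 H2]. split; [lia|].
    exact (prefix_recurs_trans th _ _ _ IH1 (Nat.lt_le_incl _ _ H1) IH2 H2).
Qed.

(* The witness [w] reads [th] backwards from ever later positions [ms j]; every
   [ms (S j)] closes a later copy of the prefix of length [ms j], so these readings
   are coherent. *)
Lemma disjunctive_reversed_extension th u : word N th -> disjunctive N th ->
  (forall a, In a u -> (a < N)%nat) ->
  exists w, word N w /\ prefix w (length u) = u /\
    forall M, exists m, (M <= m)%nat /\ forall i, (i < m)%nat -> w i = th (m - 1 - i)%nat.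
Proof.
  intros Hth Hd Hu.
  destruct (disjunctive_occurs_late th Hth Hd (rev u)
              (fun a Ha => Hu a (proj2 (in_rev u a) Ha)) 1) as [k [Hk Hrev]].
  rewrite length_rev in Hrev.
  destruct (dependent_choice (fun _ => True)
              (fun m n => (m < n)%nat /\ prefix_recurs th m n) (k + length u)%nat I)
    as [ms [Hms0 Hms]].
  { intros m _. destruct (disjunctive_prefix_recurs th Hth Hd m) as [n Hn].
    exists n. auto. }
  assert (Hstep : forall j, (ms j < ms (S j))%nat /\ prefix_recurs th (ms j) (ms (S j)))
    by (intro j; apply Hms).
  pose proof (prefix_recurs_chain th ms Hstep) as Hchain.
  assert (Hgrow : forall j, (j < ms j)%nat).
  { induction j as [|j IH]; [lia|]. pose proof (proj1 (Hstep j)). lia. }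
  assert (Hread : forall j i, (i < ms j)%nat -> th (ms i - 1 - i)%nat = th (ms j - 1 - i)%nat).
  { intros j i Hi. destruct (Nat.le_ge_cases i j) as [Hij | Hji].
    - destruct (Hchain i j Hij) as [Hle Hrec]. pose proof (Hgrow i).
      rewrite <- (Hrec (ms i - 1 - i)%nat) by lia. f_equal. lia.
    - destruct (Hchain j i Hji) as [Hle Hrec].
      rewrite <- (Hrec (ms j - 1 - i)%nat) by lia. f_equal. lia. }
  exists (fun i => th (ms i - 1 - i)%nat). split; [|split].
  - intro i. apply Hth.
  - apply nth_ext with (d := 0%nat) (d' := 0%nat); rewrite length_prefix; [reflexivity|].
    intros i Hi. rewrite nth_prefix, (Hread 0%nat) by lia. rewrite Hms0.
    replace (k + length u - 1 - i)%nat with (k + (length u - 1 - i))%nat by lia.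
    rewrite Hrev, rev_nth by lia. f_equal. lia.
  - intro M. exists (ms M). split; [pose proof (Hgrow M); lia|].
    intros i Hi. apply Hread, Hi.
Qed.

Definition frequent_prefix (W : nat -> nat -> nat) (u : list nat) : Prop :=
  forall J, exists j, (J <= j)%nat /\ prefix (W j) (length u) = u.

(* Pigeonhole: only the [N] letters can follow [u] in the words [W j]. *)
Lemma frequent_prefix_extend W u : (forall j, word N (W j)) ->
  frequent_prefix W u -> exists a, frequent_prefix W (u ++ [a]).
Proof.
  intros HW Hu. apply NNPP. intro Hno.
  destruct (eventually_forall_lt
              (fun a j => prefix (W j) (S (length u)) <> u ++ [a]) N) as [J HJ].
  { intros a _. apply NNPP. intro Hfreq. apply Hno. exists a. intro J.
    apply NNPP. intro HJ. apply Hfreq. exists J. intros j Hj E. apply HJ.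
    exists j. split; [exact Hj|]. rewrite length_app, Nat.add_1_r. exact E. }
  destruct (Hu J) as [j [Hj E]].
  apply (HJ (W j (length u)) (HW j _) j Hj). rewrite prefix_S, E. reflexivity.
Qed.

Lemma frequent_prefix_limit W : (forall j, word N (W j)) ->
  exists w, word N w /\ forall k, frequent_prefix W (prefix w k).
Proof.
  intro HW.
  destruct (dependent_choice (frequent_prefix W) (fun u v => exists a, v = u ++ [a]) [])
    as [g [Hg0 Hg]].
  { intro J. exists J. split; [lia | reflexivity]. }
  { intros u Hu. destruct (frequent_prefix_extend W u HW Hu) as [a Ha].
    exists (u ++ [a]). eauto. }
  assert (Hlen : forall n, length (g n) = n).
  { induction n as [|n IH]; [rewrite Hg0; reflexivity|].
    destruct (proj2 (Hg n)) as [a ->]. rewrite length_app, IH, Nat.add_1_r. reflexivity. }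
  set (w i := nth i (g (S i)) 0%nat).
  assert (Hpre : forall n, prefix w n = g n).
  { induction n as [|n IH]; [rewrite Hg0; reflexivity|].
    rewrite prefix_S, IH. destruct (proj2 (Hg n)) as [a Ha].
    unfold w. rewrite Ha, app_nth2, Hlen, Nat.sub_diag by (rewrite Hlen; lia).
    reflexivity. }
  exists w. split.
  - intro i. destruct (proj1 (Hg (S i)) 0%nat) as [j [_ E]].
    rewrite Hlen, <- Hpre in E. rewrite <- (prefix_inj _ _ _ E i) by lia. apply HW.
  - intro k. rewrite Hpre. apply Hg.
Qed.

Lemma strongly_reversible_reversible X d A pi th :
  strongly_reversible X d N A pi th -> reversible X d N A pi th.
Proof.
  intros [w [Hw [Hint H]]]. exists w. split; [exact Hw|]. split; [exact Hint|].
  intros M L HM HL. destruct (H (M + L)%nat ltac:(lia)) as [n [Hn E]].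
  exists (n - L)%nat. split; [lia|]. intros i Hi. rewrite E by lia. f_equal. lia.
Qed.

End Words.

Lemma fcomp_app X (f : nat -> X -> X) l1 l2 x :
  fcomp X f (l1 ++ l2) x = fcomp X f l1 (fcomp X f l2 x).
Proof. induction l1 as [|a l1 IH]; simpl; [reflexivity | rewrite IH; reflexivity]. Qed.

Lemma compact_image X d (g : X -> X) K :
  continuous_map X d g -> compact_set X d K -> compact_set X d (image_set X g K).
Proof.
  intros Hg HK I U HU Hcov.
  destruct (HK I (fun i x => U i (g x))) as [l Hl].
  - intros i x Hx. destruct (HU i (g x) Hx) as [e [He Hball]].
    destruct (Hg x e He) as [delta [Hdelta Hcont]]. exists delta. auto.
  - intros x Hx. apply Hcov. exists x. auto.
  - exists l. intros y [x [Hx ->]]. apply Hl, Hx.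
Qed.

Section Attractor.

Variables (X : Type) (d : X -> X -> R) (N : nat) (f : nat -> X -> X).
Variables (A : X -> Prop) (pi : (nat -> nat) -> X).
Hypothesis Hmetric : is_metric X d.
Hypothesis Hifs : IFS_ok X d N f.
Hypothesis Hattr : attractor X d N f A.
Hypothesis Hcoord : coordinate_map X d N f A pi.

Lemma dist_sym x y : d x y = d y x.
Proof. apply Hmetric. Qed.

Lemma dist_triangle x y z : d x z <= d x y + d y z.
Proof. apply Hmetric. Qed.

(* The sets [d y x > 1/(n+1)] form an open cover of [K] if [x] is not in [K]. *)
Lemma compact_contains_limit K x : compact_set X d K ->
  (forall e, 0 < e -> exists p, K p /\ d p x < e) -> K x.
Proof.
  destruct Hmetric as [Hpos [Hzero _]]. intros HK Hlim. apply NNPP. intro Hx.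
  destruct (HK nat (fun n y => / INR (S n) < d y x)) as [l Hl].
  - intros n y Hy. exists (d y x - / INR (S n)). split; [lra|].
    intros z Hz. pose proof (dist_triangle y z x). lra.
  - intros y Hy. assert (Hyx : 0 < d y x).
    { destruct (Hpos y x) as [H | H]; [exact H|].
      exfalso. apply Hx. replace x with y by (apply Hzero; auto). exact Hy. }
    destruct (archimed_cor1 _ Hyx) as [n [Hn Hn0]]. exists (n - 1)%nat.
    replace (S (n - 1)) with n by lia. exact Hn.
  - set (n0 := list_max l).
    assert (He : 0 < / INR (S n0)) by (apply Rinv_0_lt_compat, lt_0_INR; lia).
    destruct (Hlim _ He) as [p [Hp Hpx]]. destruct (Hl p Hp) as [i [Hi Hpi]].
    assert (Hin : (i <= n0)%nat).
    { apply (proj1 (Forall_forall _ l) (proj1 (list_max_le l n0) (Nat.le_refl _))), Hi. }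
    assert (/ INR (S n0) <= / INR (S i))
      by (apply Rinv_le_contravar; [apply lt_0_INR; lia | apply le_INR; lia]).
    lra.
Qed.

Lemma fcomp_continuous l : (forall a, In a l -> (a < N)%nat) ->
  continuous_map X d (fcomp X f l).
Proof.
  induction l as [|a l IH]; intros Hl x e He; simpl.
  - exists e. auto.
  - destruct (Hifs a (Hl a (or_introl eq_refl)) (fcomp X f l x) e He) as [e1 [He1 H1]].
    destruct (IH (fun b Hb => Hl b (or_intror Hb)) x e1 He1) as [delta [Hdelta H2]].
    exists delta. auto.
Qed.

Lemma fcomp_maps_attractor l x : (forall a, In a l -> (a < N)%nat) ->
  A x -> A (fcomp X f l x).
Proof.
  destruct Hattr as [_ [HF _]].
  induction l as [|a l IH]; intros Hl Hx; simpl; [exact Hx|].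
  apply HF. exists a. split; [apply Hl; left; reflexivity|].
  exists (fcomp X f l x). split; [|reflexivity]. apply IH; [|exact Hx].
  intros b Hb. apply Hl. right. exact Hb.
Qed.

Lemma coordinate_approx w : word N w -> forall e, 0 < e -> exists K, forall k,
  (K <= k)%nat -> forall x, A x -> d (fcomp X f (prefix w k) x) (pi w) < e.
Proof.
  destruct Hattr as [HA [_ [U HU]]]. intros Hw e He.
  assert (Hbasin : subset X A (basin X d N f A)).
  { intros x Hx. exists U. split; [exact HU | apply HU, Hx]. }
  destruct (Hcoord w Hw A HA Hbasin e He) as [K HK]. exists K. intros k Hk x Hx.
  destruct (proj1 (HK k Hk) (fcomp X f (prefix w k) x)) as [y [-> Hy]]; [|exact Hy].
  exists x. auto.
Qed.

Lemma attractor_address x : A x -> exists (s : nat -> nat) (pts : nat -> X),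
  word N s /\ (forall k, A (pts k)) /\ forall k, x = fcomp X f (prefix s k) (pts k).
Proof.
  destruct Hattr as [_ [HF _]]. intro Hx.
  destruct (dependent_choice (fun q : nat * X => A (snd q))
              (fun q q' => (fst q' < N)%nat /\ snd q = f (fst q') (snd q')) (0%nat, x) Hx)
    as [g [Hg0 Hg]].
  { intros [i y] Hy. destruct (proj2 (HF y) Hy) as [a [Ha [z [Hz E]]]].
    exists (a, z). auto. }
  exists (fun k => fst (g (S k))), (fun k => snd (g k)). split; [|split].
  - intro k. apply Hg.
  - intro k. apply Hg.
  - induction k as [|k IH]; [rewrite Hg0; reflexivity|].
    rewrite prefix_S, fcomp_app. simpl. rewrite <- (proj2 (proj2 (Hg k))). exact IH.
Qed.

Lemma disjunctive_strongly_reversible th :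
  nonempty_set X (interior_set X d A) -> word N th -> disjunctive N th ->
  strongly_reversible X d N A pi th.
Proof.
  intros [x [U [HUo [HUA HUx]]]] Hth Hd.
  destruct (HUo x HUx) as [e [He Hball]].
  destruct Hattr as [[[a Ha] _] _].
  destruct (attractor_address x (HUA x HUx)) as [s [pts [Hs [Hpts Hx]]]].
  destruct (coordinate_approx s Hs (e / 4) ltac:(lra)) as [K HK].
  destruct (disjunctive_reversed_extension N th (prefix s K) Hth Hd
              (word_prefix_letters N s K Hs)) as [w [Hw [HwK Hsr]]].
  rewrite length_prefix in HwK.
  exists w. split; [exact Hw|]. split.
  2: { intros M _. apply Hsr. }
  exists U. split; [exact HUo|]. split; [exact HUA|]. apply Hball.
  destruct (coordinate_approx w Hw (e / 2) ltac:(lra)) as [K1 HK1].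
  set (y := fcomp X f (map w (seq K K1)) a).
  assert (Hy : A y) by (apply fcomp_maps_attractor; [apply word_segment_letters|]; auto).
  assert (Hw_near := HK1 (K + K1)%nat ltac:(lia) a Ha).
  rewrite prefix_add, fcomp_app, HwK in Hw_near. fold y in Hw_near.
  assert (Hs_near := HK K (le_n K) y Hy).
  assert (Hx_near := HK K (le_n K) (pts K) (Hpts K)). rewrite <- Hx in Hx_near.
  pose proof (dist_triangle x (pi s) (pi w)).
  pose proof (dist_triangle (pi s) (fcomp X f (prefix s K) y) (pi w)).
  pose proof (dist_sym (pi s) (fcomp X f (prefix s K) y)). lra.
Qed.

Lemma reversible_full th : reversible X d N A pi th -> full X d f A th.
Proof.
  intros [w [Hw [[U [HUo [HUA HUw]]] Hrev]]].
  destruct (HUo _ HUw) as [e [He Hball]].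
  destruct (coordinate_approx w Hw e He) as [K0 HK0].
  set (K := Nat.max K0 1).
  destruct Hattr as [[[a Ha] HAc] _].
  exists (image_set X (fcomp X f (prefix w K)) A). split; [split|split].
  - exists (fcomp X f (prefix w K) a), a. auto.
  - apply compact_image; [|exact HAc].
    apply fcomp_continuous, word_prefix_letters, Hw.
  - intros y [z [Hz ->]]. exists U. split; [exact HUo|]. split; [exact HUA|].
    apply Hball. rewrite dist_sym. apply HK0; [unfold K; lia | exact Hz].
  - intros M HM. destruct (Hrev M K HM ltac:(unfold K; lia)) as [m [Hm E]].
    exists m, (m + K)%nat. split; [exact Hm|]. split; [unfold K; lia|].
    replace (m + K - m)%nat with K by lia. rewrite rev_map_seq, (prefix_ext _ w K).
    + intros y Hy. exact Hy.
    + intros i Hi. symmetry. apply E, Hi.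
Qed.

Lemma full_reversible th : word N th -> full X d f A th -> reversible X d N A pi th.
Proof.
  intros Hth [A' [[_ HA'c] [HA'int Hfull]]].
  set (block_in j (mn : nat * nat) := (S j <= fst mn)%nat /\ (fst mn < snd mn)%nat /\
     subset X (image_set X (fcomp X f (rev (map th (seq (fst mn) (snd mn - fst mn))))) A) A').
  destruct (ClassicalEpsilon.choice block_in) as [mn Hmn].
  { intro j. destruct (Hfull (S j) ltac:(lia)) as [m [n Hmn]]. exists (m, n). exact Hmn. }
  set (W j i := th (snd (mn j) - 1 - i)%nat).
  assert (HW : forall j, word N (W j)) by (intros j i; apply Hth).
  destruct (frequent_prefix_limit N W HW) as [w [Hw Hfreq]].
  destruct Hattr as [[[a Ha] _] _].
  exists w. split; [exact Hw|]. split.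
  - apply HA'int, (compact_contains_limit A' (pi w) HA'c).
    intros e He. destruct (coordinate_approx w Hw e He) as [K HK].
    destruct (Hfreq K 0%nat) as [j [_ Ej]]. rewrite length_prefix in Ej.
    destruct (Hmn j) as [_ [_ Hblock]].
    set (r := (snd (mn j) - fst (mn j))%nat).
    exists (fcomp X f (prefix (W j) (K + r)) a). split.
    + replace (K + r)%nat with (r + K)%nat by lia. rewrite prefix_add, fcomp_app.
      replace (prefix (W j) r) with (rev (map th (seq (fst (mn j)) r))).
      * apply Hblock. eexists. split; [|reflexivity].
        apply fcomp_maps_attractor; [apply word_segment_letters, HW | exact Ha].
      * rewrite rev_map_seq. apply prefix_ext. intros i Hi. unfold W, r. f_equal. lia.
    + rewrite prefix_add, fcomp_app, Ej. apply HK; [lia|].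
      apply fcomp_maps_attractor; [apply word_segment_letters, HW | exact Ha].
  - intros M L _ _. destruct (Hfreq L (M + L)%nat) as [j [Hj Ej]].
    rewrite length_prefix in Ej. destruct (Hmn j) as [Hj1 [Hj2 _]].
    exists (snd (mn j) - L)%nat. split; [lia|].
    intros i Hi. rewrite <- (prefix_inj _ _ _ Ej i Hi). unfold W. f_equal. lia.
Qed.

End Attractor.

Theorem mainTheorem1 (X : Type) (d : X -> X -> R) (N : nat) (f : nat -> X -> X)
  (A : X -> Prop) (pi : (nat -> nat) -> X) :
  is_metric X d -> complete_metric X d -> IFS_ok X d N f ->
  attractor X d N f A -> point_fibred X d N f A -> coordinate_map X d N f A pi ->
  ((2 <= N)%nat -> forall l : list (nat -> nat),
      exists th, word N th /\ disjunctive N th /\ ~ In th l) /\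
  (nonempty_set X (interior_set X d A) ->
      forall th, word N th -> disjunctive N th -> strongly_reversible X d N A pi th) /\
  (forall th, word N th -> strongly_reversible X d N A pi th -> reversible X d N A pi th) /\
  (forall th, word N th -> (reversible X d N A pi th <-> full X d f A th)).
Proof.
  intros Hmetric _ Hifs Hattr _ Hcoord. split; [|split; [|split]].
  - intros HN L. apply disjunctive_word_not_in, HN.
  - intros Hint th. apply (disjunctive_strongly_reversible X d N f); assumption.
  - intros th _. apply strongly_reversible_reversible.
  - intros th Hth. split.
    + apply reversible_full; assumption.
    + apply full_reversible; assumption.
Qed.
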